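(* Let $\mathcal{T}$ be a teacher class and let $H\subseteq\mathcal{X}\times\mathcal{Y}$ be a non-empty history consistent with $\mathcal{T}$. For every deterministic DFF algorithm $\mathcal{A}$, $M(\mathcal{A},\mathcal{T},H)\geq\mathrm{DFFdim}(\mathcal{T},H)$.
   Context: Setting. $\mathcal{X}$ is a set of examples, $\mathcal{Y}$ a finite set of labels, and $\Phi$ a set of Boolean features $\phi:\mathcal{X}\to\{0,1\}$; $\bot$ denotes a null symbol not in $\mathcal{X}\cup\mathcal{Y}\cup\Phi$. A teacher over $\mathcal{X},\mathcal{Y},\Phi$ is a pair $T=(\ell,\psi)$ with $\ell:\mathcal{X}\to\mathcal{Y}$ and $\psi:\mathcal{X}\times\mathcal{X}\to\Phi\cup\{\bot\}$ such that whenever $\ell(x)\neq\ell(\hat x)$, $\phi:=\psi(x,\hat x)\in\Phi$, $\phi(x)=1$ and $\phi(\hat x)=0$. A teacher class is a set of teachers. A history is a non-empty set $H\subseteq\mathcal{X}\times\mathcal{Y}$; a teacher $(\ell,\psi)$ is consistent with $H$ if $\ell(x)=y$ for all $(x,y)\in H$; $\mathcal{T}_H$ is the set of teachers in $\mathcal{T}$ consistent with $H$, and $\mathcal{T}$ is consistent with $H$ if $\mathcal{T}_H\neq\emptyset$. DFF protocol. A DFF algorithm is given $H$ in advance. In each round $t=1,2,\dots$: an example $x_t\in\mathcal{X}$ arrives; the algorithm outputs a predicted label $\hat y_t$ and an explanation $\hat x_t$, where $(\hat x_t,\hat y_t)$ must belong to $H\cup\{(x_s,y_s):s<t\}$; if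 $\hat y_t=y_t$ (the true label of $x_t$) the algorithm learns only that it was correct; otherwise (a mistake) it receives $y_t$ and a feature $\phi_t\in\Phi$. The feedback of round $t$ is consistent with a teacher $(\ell,\psi)$ if $y_t=\ell(x_t)$ and, when $\hat y_t\neq y_t$, $\phi_t=\psi(x_t,\hat x_t)$. $M(\mathcal{A},\mathcal{T},H)$ denotes the supremum, over all finite example sequences and all teachers $T\in\mathcal{T}_H$, of the number of mistakes of $\mathcal{A}$ when all feedback is consistent with $T$. DFF dimension. A DFF tree is a rooted tree whose nodes are triples $\langle y,\phi,x\rangle$ with $y\in\mathcal{Y}\cup\{\bot\}$, $\phi\in\Phi\cup\{\bot\}$, $x\in\mathcal{X}\cup\{\bot\}$, such that the root has $y=\phi=\bot$, a node has $x=\bot$ iff it is a leaf, every edge is labeled by a pair $(\hat x,\hat y)\in\mathcal{X}\times\mathcal{Y}$, and every non-root node $\langle y,\phi,x\rangle$ with incoming edge $(\hat x,\hat y)$ has $\phi\neq\bot$ whenever $y\neq\hat y$. For a parent–child pair $\langle\cdot,\cdot,x\rangle\xrightarrow{(\hat x,\hat y)}\langle y,\phi,\cdot\rangle$ on a path, $(x,y)$ is called a labeled example in that path. A path from the root is consistent with a teacher $(\ell,\psi)$ if for every such parent–child pair on it, $\ell(x)=y$ and, if $y\neq\hat y$, $\psi(x,\hat x)=\phi$. Given $\mathcal{T}$ consistent with $H$, a DFF tree is shattered by $\mathcal{T}$ and $H$ if: (1) every non-root node $\langle y,\phi,x\rangle$ with incoming edge $(\hat x,\hat y)$ has $y\neq\hat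 y$; (2) the labels of the outgoing edges of each non-leaf node $v$ are exactly the pairs that belong to $H$ or are labeled examples in the path from the root to $v$; (3) every root-to-leaf path is consistent with some teacher in $\mathcal{T}_H$; (4) all root-to-leaf paths have the same number of edges, called the height. $\mathrm{DFFdim}(\mathcal{T},H)$ is the maximal height of a DFF tree shattered by $\mathcal{T}$ and $H$. *)

From Stdlib Require List.
From mathcomp Require Import all_boot.

Set Implicit Arguments.
Unset Strict Implicit.
Unset Printing Implicit Defensive.

Section DFF.
Variables (X : Type) (Y : finType).

(** Boolean features are functions X -> bool; the feature set Phi is a
    predicate on them.  The null symbol ⊥ is modelled by [None]. *)
Definition feature := X -> bool.

Record teacher := Teacher {
  lab : X -> Y;
  psi : X -> X -> option feature
}.

Definition is_teacher (Phi : feature -> Prop) (T : teacher) : Prop :=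
  forall x xh, lab T x <> lab T xh ->
    exists phi, psi T x xh = Some phi /\ Phi phi /\ phi x = true /\ phi xh = false.

Definition history := X * Y -> Prop.

Definition consistent_with (T : teacher) (H : history) : Prop :=
  forall x y, H (x, y) -> lab T x = y.

(** What a deterministic algorithm has seen in a past round: the example,
    its true label (equal to the prediction when correct, given as feedback
    otherwise), and the feature received (None when the prediction was
    correct). *)
Definition transcript := seq (X * Y * option feature).

(** A deterministic DFF algorithm: maps the transcript of past rounds and
    the current example to an explanation/prediction pair (xh, yh). *)
Definition algorithm := transcript -> X -> X * Y.

Definition valid_algorithm (H : history) (A : algorithm) : Prop :=
  forall tr x, H (A tr x) \/
    exists f, List.In ((A tr x).1, (A tr x).2, f) tr.

Fixpoint mistakes_from (A : algorithm) (T : teacher) (tr : transcript)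
    (xs : seq X) : nat :=
  match xs with
  | [::] => 0
  | x :: xs' =>
      let xh := (A tr x).1 in
      let yh := (A tr x).2 in
      let y := lab T x in
      if yh == y then mistakes_from A T (rcons tr (x, y, None)) xs'
      else (mistakes_from A T (rcons tr (x, y, psi T x xh)) xs').+1
  end.

Definition mistakes (A : algorithm) (T : teacher) (xs : seq X) : nat :=
  mistakes_from A T [::] xs.

(** A node is a triple <y, phi, x> with each component possibly
    ⊥ (None); a node is a leaf iff x = None.  The children of a node are
    indexed by edge labels (xh, yh) in X * Y; only the labels allowed by the
    shattering condition (2) are actual edges, the others are ignored. *)
Inductive dfftree :=
  DNode : option Y -> option feature -> option X -> (X * Y -> dfftree) -> dfftree.

Definition node_y (t : dfftree) := let: DNode y _ _ _ := t in y.
Definition node_phi (t : dfftree) := let: DNode _ f _ _ := t in f.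

(** A step of a path: parent example x, edge label (xh, yh),
    child's y and phi. *)
Definition step := (X * (X * Y) * option Y * option feature)%type.

Definition step_x (s : step) : X := s.1.1.1.
Definition step_edge (s : step) : X * Y := s.1.1.2.
Definition step_y (s : step) : option Y := s.1.2.
Definition step_phi (s : step) : option feature := s.2.

Definition step_example (s : step) : seq (X * Y) :=
  match step_y s with Some y => [:: (step_x s, y)] | None => [::] end.

(** [rtl_path H Ex t p]: p is a root-to-leaf path of t, where the outgoing
    edges of each internal node are exactly the pairs in H or among the
    labelled examples Ex accumulated along the path from the root
    (condition (2) of shattering). *)
Fixpoint rtl_path (H : history) (Ex : seq (X * Y)) (t : dfftree)
    (p : seq step) {struct t} : Prop :=
  match t, p with
  | DNode _ _ None _, [::] => True
  | DNode _ _ (Some x) ch, s :: p' =>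
      step_x s = x /\ (H (step_edge s) \/ List.In (step_edge s) Ex) /\
      node_y (ch (step_edge s)) = step_y s /\
      node_phi (ch (step_edge s)) = step_phi s /\
      rtl_path H (Ex ++ step_example s) (ch (step_edge s)) p'
  | _, _ => False
  end.

Definition step_wf (Phi : feature -> Prop) (s : step) : Prop :=
  (forall f, step_phi s = Some f -> Phi f) /\
  (step_y s <> Some (step_edge s).2 -> step_phi s <> None).

Definition path_consistent (T : teacher) (p : seq step) : Prop :=
  forall s, List.In s p ->
    step_y s = Some (lab T (step_x s)) /\
    (step_y s <> Some (step_edge s).2 -> step_phi s = psi T (step_x s) (step_edge s).1).

Definition shattered (Phi : feature -> Prop) (TC : teacher -> Prop)
    (H : history) (t : dfftree) (d : nat) : Prop :=
  node_y t = None /\ node_phi t = None /\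
  forall p, rtl_path H [::] t p ->
    (forall s, List.In s p -> step_wf Phi s) /\
    (forall s, List.In s p -> step_y s <> Some (step_edge s).2) /\
    (exists T, TC T /\ consistent_with T H /\ path_consistent T p) /\
    size p = d.

End DFF.

(* The adversary walks down a shattered tree, always following the edge
   labelled by the algorithm's own choice (explanation, prediction) and
   revealing the label and feature stored in the child.  Condition (2) of
   shattering makes every such choice an edge, so the walk is a root-to-leaf
   path; condition (3) provides a teacher consistent with it, and condition
   (1) makes every round of the walk a mistake. *)
From mathcomp Require Import all_boot.

Set Implicit Arguments.
Unset Strict Implicit.
Unset Printing Implicit Defensive.

Section Adversary.
Variables (X : Type) (Y : finType) (A : algorithm X Y).

(* When the child is unlabelled the recorded label [e.2] is junk; this never
   happens along root-to-leaf paths of a shattered tree. *)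
Fixpoint adversary_path (t : dfftree X Y) (tr : transcript X Y)
    : seq (step X Y) :=
  match t with
  | DNode _ _ None _ => [::]
  | DNode _ _ (Some x) ch =>
      let e := A tr x in
      let c := ch e in
      (x, e, node_y c, node_phi c)
        :: adversary_path c (rcons tr (x, odflt e.2 (node_y c), node_phi c))
  end.

Lemma adversary_path_mistakes (T : teacher X Y) t tr :
  path_consistent T (adversary_path t tr) ->
  (forall s, List.In s (adversary_path t tr) ->
     step_y s <> Some (step_edge s).2) ->
  mistakes_from A T tr (map (@step_x X Y) (adversary_path t tr))
  = size (adversary_path t tr).
Proof.
elim: t tr => y0 f0 [x|] ch IH tr //= Hcons Hneq.
have [Hy Hphi] := Hcons _ (or_introl erefl).
have Hwrong := Hneq _ (or_introl erefl).
rewrite /step_y /step_x /step_edge /step_phi /= in Hy Hphi Hwrong.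
have -> : ((A tr x).2 == lab T x) = false.
  by apply/eqP => E; apply: Hwrong; rewrite Hy E.
rewrite -(Hphi Hwrong) Hy (_ : step_x _ = x) // IH //; rewrite Hy in Hcons Hneq.
- by move=> s Hs; apply: Hcons; right.
- by move=> s Hs; apply: Hneq; right.
Qed.

Variable H : history X Y.
Hypothesis HA : valid_algorithm H A.
Hypothesis Hne : exists e, H e.

Lemma rtl_path_exists t Ex : exists p, rtl_path H Ex t p.
Proof.
elim: t Ex => y0 f0 [x|] ch IH Ex /=; last by exists [::].
have [e He] := Hne.
set s := (x, e, node_y (ch e), node_phi (ch e)).
have [p Hp] := IH e (Ex ++ step_example s).
by exists (s :: p); do !split => //; left.
Qed.

Lemma adversary_path_rtl t tr Ex :
  (forall x y f, List.In (x, y, f) tr -> List.In (x, y) Ex) ->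
  (forall p, rtl_path H Ex t p -> forall s, List.In s p -> step_y s <> None) ->
  rtl_path H Ex t (adversary_path t tr).
Proof.
elim: t tr Ex => y0 f0 [x|] ch IH tr Ex Htr Hlab //=.
set e := A tr x.
have He : H e \/ List.In e Ex.
  case: (HA tr x) => [|[f Hf]]; first by left.
  by right; move/Htr: Hf; rewrite -surjective_pairing.
(* An unlabelled child would lie on some root-to-leaf path, since the edges
   taken from H always exist. *)
case Hy: (node_y (ch e)) => [y|]; last first.
  have [p Hp] := rtl_path_exists (ch e) Ex.
  have Hpath : rtl_path H Ex (DNode y0 f0 (Some x) ch)
                 ((x, e, None, node_phi (ch e)) :: p).
    by do !split => //; rewrite /step_example /step_y /= cats0.
  by exfalso; apply: (Hlab _ Hpath _ (or_introl erefl)).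
have Hextend p : rtl_path H (Ex ++ [:: (x, y)]) (ch e) p ->
    rtl_path H Ex (DNode y0 f0 (Some x) ch)
      ((x, e, Some y, node_phi (ch e)) :: p).
  by move=> Hp; do !split.
do !split => //; apply: IH => [x' y' f'|p Hp s Hs].
  rewrite -cats1 => /(@List.in_app_or _ _ _ _) [/Htr Hin | [[<- <- _] | []]].
  - by apply: List.in_or_app; left.
  - by apply: List.in_or_app; right; left.
by apply: (Hlab _ (Hextend p Hp)); right.
Qed.

End Adversary.

Theorem mainTheorem2 (X : Type) (Y : finType) (Phi : feature X -> Prop)
    (TC : teacher X Y -> Prop)
    (HTC : forall T, TC T -> is_teacher Phi T)
    (H : history X Y)
    (Hne : exists p, H p)
    (Hcons : exists T, TC T /\ consistent_with T H)
    (A : algorithm X Y) (HA : valid_algorithm H A) (d : nat) :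
  (exists t : dfftree X Y, shattered Phi TC H t d) ->
  exists (xs : seq X) (T : teacher X Y),
    TC T /\ consistent_with T H /\ d <= mistakes A T xs.
Proof.
move=> [t [_ [_ Hsh]]].
have Hlab p : rtl_path H [::] t p -> forall s, List.In s p -> step_y s <> None.
  by move=> /Hsh [_ [_ [[T [_ [_ HT]]] _]]] s /HT [-> _].
have Hadv :=
  adversary_path_rtl (tr := [::]) (Ex := [::]) HA Hne (fun _ _ _ => id) Hlab.
have [_ [Hneq [[T [HT [HTH HpT]]] Hsz]]] := Hsh _ Hadv.
exists (map (@step_x X Y) (adversary_path A t [::])), T; do !split => //.
by rewrite /mistakes adversary_path_mistakes // Hsz.
Qed.
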